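(* Let $G$ be a finite simple graph, let $I$ be a maximum critical independent set in $G$, and let $X=I\cup N(I)$. Then $\operatorname{diadem}(G)\cup N(\operatorname{diadem}(G)) = X$.
   Context: For $Y\subseteq V(G)$, $N(Y)$ is the set of vertices adjacent to some vertex of $Y$, and $d(Y)=|Y|-|N(Y)|$. An independent set $S$ is critical if $d(S)=\max\{d(Y):Y\subseteq V(G)\}$; the empty set may be critical. A maximum critical independent set is a critical independent set of maximum cardinality. $\operatorname{diadem}(G)$ is the union of all maximum critical independent sets of $G$. *)

From mathcomp Require Import all_boot all_order all_algebra.
Set Implicit Arguments. Unset Strict Implicit. Unset Printing Implicit Defensive.
Import GRing.Theory Num.Theory.
Local Open Scope ring_scope.

Definition simple_graph (T : finType) (e : rel T) : Prop :=
  symmetric e /\ irreflexive e.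

Section Defs.
Variables (T : finType) (e : rel T).

Definition nbhd (Y : {set T}) : {set T} :=
  [set v | [exists u in Y, e u v]].

Definition dif (Y : {set T}) : int := (#|Y|%:Z - #|nbhd Y|%:Z)%R.

Definition independent (S : {set T}) : bool :=
  [forall u in S, forall v in S, ~~ e u v].

Definition critical (S : {set T}) : bool :=
  [forall Y : {set T}, dif Y <= dif S].

Definition critical_independent (S : {set T}) : bool :=
  independent S && critical S.

Definition max_critical_independent (S : {set T}) : bool :=
  critical_independent S &&
  [forall S' : {set T}, critical_independent S' ==> (#|S'| <= #|S|)%N].

Definition diadem : {set T} :=
  \bigcup_(S : {set T} | max_critical_independent S) S.

End Defs.

From mathcomp Require Import all_boot all_order all_algebra.
From mathcomp Require Import zify.
Set Implicit Arguments. Unset Strict Implicit. Unset Printing Implicit Defensive.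
Import Order.TTheory GRing.Theory Num.Theory.
Local Open Scope ring_scope.

(* The difference function d is supermodular, so critical sets are
   closed under union and intersection, and the "core" Y \ N(Y) of a critical
   set Y is critical independent.  Given two maximum critical independent sets
   I and J, the core of I ∪ J can be added to I, hence lies in I by maximality;
   every vertex of J outside N(I) lies in that core, so J ⊆ I ∪ N(I).  Then
   |I| = |J| and d(I) = d(I ∩ J) force N(I) \ N(J) to be exactly J \ I, so
   I ∪ N(I) ⊆ J ∪ N(J).  Thus all maximum critical independent sets have the
   same closed neighbourhood, which is therefore that of their union. *)

Section CriticalSets.
Variables (T : finType) (e : rel T).

Lemma nbhdP (A : {set T}) v :
  reflect (exists2 u, u \in A & e u v) (v \in nbhd e A).
Proof.
rewrite inE; apply: (iffP existsP) => [[u /andP[]]|[u uA euv]]; first by exists u.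
by exists u; rewrite uA.
Qed.

Lemma nbhdU (A B : {set T}) : nbhd e (A :|: B) = nbhd e A :|: nbhd e B.
Proof.
apply/setP=> v; rewrite [in RHS]inE; apply/nbhdP/orP.
  by case=> u; rewrite inE => /orP[] uAB euv; [left|right]; apply/nbhdP; exists u.
by case=> /nbhdP[u uAB euv]; exists u; rewrite // inE uAB ?orbT.
Qed.

Lemma nbhdS (A B : {set T}) : A \subset B -> nbhd e A \subset nbhd e B.
Proof.
move=> /subsetP sAB; apply/subsetP=> v /nbhdP[u uA euv].
by apply/nbhdP; exists u; rewrite ?sAB.
Qed.

Lemma nbhdI_sub (A B : {set T}) : nbhd e (A :&: B) \subset nbhd e A :&: nbhd e B.
Proof. by rewrite subsetI !nbhdS ?subsetIl ?subsetIr. Qed.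

Lemma dif_supermodular (A B : {set T}) :
  dif e A + dif e B <= dif e (A :|: B) + dif e (A :&: B).
Proof.
rewrite /dif nbhdU.
have := cardsUI A B; have := cardsUI (nbhd e A) (nbhd e B).
have := subset_leq_card (nbhdI_sub A B); lia.
Qed.

Lemma criticalP (A : {set T}) :
  reflect (forall Y, dif e Y <= dif e A) (critical e A).
Proof. exact: forallP. Qed.

Lemma criticalU (A B : {set T}) :
  critical e A -> critical e B -> critical e (A :|: B).
Proof.
move=> /criticalP cA /criticalP cB; apply/criticalP=> Y.
have := dif_supermodular A B; have := cB (A :&: B); have := cA Y; lia.
Qed.

Lemma criticalI (A B : {set T}) :
  critical e A -> critical e B -> critical e (A :&: B).
Proof.
move=> /criticalP cA /criticalP cB; apply/criticalP=> Y.
have := dif_supermodular A B; have := cA (A :|: B); have := cB Y; lia.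
Qed.

Lemma critical_dif_eq (A B : {set T}) :
  critical e A -> critical e B -> dif e A = dif e B.
Proof. by move=> /criticalP cA /criticalP cB; have := cA B; have := cB A; lia. Qed.

Lemma independentP (S : {set T}) :
  reflect (forall u v, u \in S -> v \in S -> ~~ e u v) (independent e S).
Proof.
apply: (iffP forallP) => [h u v uS vS|h u].
  by move: (h u); rewrite uS => /forallP /(_ v); rewrite vS.
by apply/implyP=> uS; apply/forallP=> v; apply/implyP; apply: h.
Qed.

Lemma independent_notin_nbhd (S : {set T}) v :
  independent e S -> v \in S -> v \notin nbhd e S.
Proof.
by move=> /independentP iS vS; apply/nbhdP=> -[u uS euv]; move/negP: (iS u v uS vS).
Qed.

Lemma independent_setD_nbhd (Y : {set T}) : independent e (Y :\: nbhd e Y).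
Proof.
apply/independentP=> u v; rewrite !in_setD => /andP[_ uY] /andP[vN _].
by apply: contra vN => euv; apply/nbhdP; exists u.
Qed.

Lemma max_critical_independentP (I : {set T}) :
  reflect (critical_independent e I /\
           forall S, critical_independent e S -> (#|S| <= #|I|)%N)
          (max_critical_independent e I).
Proof.
apply: (iffP andP) => -[ciI mI]; split=> //.
  by move=> S; apply/implyP/(forallP mI).
by apply/forallP=> S; apply/implyP/mI.
Qed.

Lemma max_critical_independent_card (I J : {set T}) :
  max_critical_independent e I -> max_critical_independent e J -> #|I| = #|J|.
Proof.
move=> /max_critical_independentP[ciI mI] /max_critical_independentP[ciJ mJ].
by apply/eqP; rewrite eqn_leq mI ?mJ.
Qed.

Hypothesis esym : symmetric e.

Lemma nbhd_setD_nbhd_sub (Y : {set T}) :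
  nbhd e (Y :\: nbhd e Y) \subset nbhd e Y :\: Y.
Proof.
apply/subsetP=> v /nbhdP[u]; rewrite inE => /andP[uN uY] euv.
rewrite inE; apply/andP; split; last by apply/nbhdP; exists u.
by apply: contra uN => vY; apply/nbhdP; exists v; rewrite // esym.
Qed.

Lemma dif_setD_nbhd (Y : {set T}) : dif e Y <= dif e (Y :\: nbhd e Y).
Proof.
rewrite /dif; have := subset_leq_card (nbhd_setD_nbhd_sub Y).
have := cardsD Y (nbhd e Y); have := cardsD (nbhd e Y) Y; rewrite setIC.
have := subset_leq_card (subsetIl Y (nbhd e Y)).
have := subset_leq_card (subsetIr Y (nbhd e Y)); lia.
Qed.

Lemma critical_independent_setD_nbhd (Y : {set T}) :
  critical e Y -> critical_independent e (Y :\: nbhd e Y).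
Proof.
move=> /criticalP cY; rewrite /critical_independent independent_setD_nbhd.
apply/criticalP=> Z; exact: le_trans (cY Z) (dif_setD_nbhd Y).
Qed.

Lemma max_critical_independent_sub (I J : {set T}) :
  max_critical_independent e I -> max_critical_independent e J ->
  J \subset I :|: nbhd e I.
Proof.
move=> /max_critical_independentP[/andP[iI cI] mI].
move=> /max_critical_independentP[/andP[iJ cJ] _].
pose U := I :|: J; pose U0 := U :\: nbhd e U.
have /andP[iU0 cU0] : critical_independent e U0.
  exact/critical_independent_setD_nbhd/criticalU.
have NIU : nbhd e I \subset nbhd e U by rewrite nbhdS ?subsetUl.
have U0_notin_NI x : x \in U0 -> x \notin nbhd e I.
  by rewrite inE => /andP[xNU _]; apply: contra xNU; apply: (subsetP NIU).
have ciIU0 : critical_independent e (I :|: U0).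
  rewrite /critical_independent criticalU // andbT.
  apply/independentP=> u v; rewrite !in_setU => /orP[uI|uU0] /orP[vI|vU0].
  - exact: (independentP _ iI).
  - by apply/negP=> euv; case/negP: (U0_notin_NI v vU0); apply/nbhdP; exists u.
  - apply/negP=> euv; case/negP: (U0_notin_NI u uU0).
    by apply/nbhdP; exists v; rewrite // esym.
  - exact: (independentP _ iU0).
have /eqP eqI : I == I :|: U0 by rewrite eqEcard subsetUl mI.
have U0I : U0 \subset I by rewrite eqI subsetUr.
apply/subsetP=> j jJ; rewrite inE orbC; case: (boolP (j \in nbhd e I)) => //= jNI.
apply: (subsetP U0I); rewrite in_setD nbhdU !in_setU jJ orbT andbT negb_or jNI /=.
exact: independent_notin_nbhd.
Qed.

Lemma max_critical_independent_closed_nbhd_sub (I J : {set T}) :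
  max_critical_independent e I -> max_critical_independent e J ->
  I :|: nbhd e I \subset J :|: nbhd e J.
Proof.
move=> mI mJ; have sIJ := max_critical_independent_sub mJ mI.
have sJI := max_critical_independent_sub mI mJ.
have cardIJ := max_critical_independent_card mI mJ.
case/max_critical_independentP: mI => /andP[_ cI] _.
case/max_critical_independentP: mJ => /andP[iJ cJ] _.
have difII := critical_dif_eq cI (criticalI cI cJ).
have sub_nbhdD : J :\: I \subset nbhd e I :\: nbhd e J.
  apply/subsetP=> v; rewrite in_setD => /andP[vI vJ].
  rewrite in_setD independent_notin_nbhd //=.
  by move: (subsetP sJI v vJ); rewrite in_setU (negbTE vI).
have /eqP eq_nbhdD : J :\: I == nbhd e I :\: nbhd e J.
  rewrite eqEcard sub_nbhdD /=; move: difII; rewrite /dif.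
  have := cardsD (nbhd e I) (nbhd e J); have := cardsD J I; rewrite setIC.
  have := subset_leq_card (nbhdI_sub I J); lia.
rewrite subUset sIJ /=; apply/subsetP=> v vNI; rewrite in_setU.
apply/orP; case: (boolP (v \in nbhd e J)) => vNJ; [by right | left].
have : v \in nbhd e I :\: nbhd e J by rewrite in_setD vNJ vNI.
by rewrite -eq_nbhdD in_setD => /andP[].
Qed.

End CriticalSets.

Theorem lemma2p1 (T : finType) (e : rel T) (I : {set T}) :
  simple_graph e ->
  max_critical_independent e I ->
  diadem e :|: nbhd e (diadem e) = I :|: nbhd e I.
Proof.
move=> [esym _] mI.
have closedJ J :
    max_critical_independent e J -> J :|: nbhd e J \subset I :|: nbhd e I.
  by move=> mJ; apply: max_critical_independent_closed_nbhd_sub mJ mI.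
have ID : I \subset diadem e by apply: bigcup_sup.
apply/eqP; rewrite eqEsubset (setUSS ID (nbhdS e ID)) andbT subUset.
apply/andP; split; apply/subsetP.
  by move=> v /bigcupP[J mJ vJ]; apply: (subsetP (closedJ J mJ)); rewrite in_setU vJ.
move=> v /nbhdP[u /bigcupP[J mJ uJ] euv]; apply: (subsetP (closedJ J mJ)).
by rewrite in_setU; apply/orP; right; apply/nbhdP; exists u.
Qed.
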